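(* Let $m=2^p>2$ and let $r_1,\dots,r_m\in\{1,\dots,m\}$ (repetitions allowed). Let $A$ be the $m\times m$ matrix whose $i$-th row is the $r_i$-th row of $H(m)$. If $b(r_1-1)\oplus b(r_2-1)\oplus\dots\oplus b(r_m-1)=0$, then $\mathrm{perm}\,A\neq0$.
   Context: For $m=2^p$, the Sylvester matrix $H(m)$ is defined recursively by $H(1)=[1]$ and $H(2^p)=\begin{bmatrix}H(2^{p-1})&H(2^{p-1})\\ H(2^{p-1})&-H(2^{p-1})\end{bmatrix}$, rows and columns indexed $1,\dots,m$; equivalently $[H(m)]_{i,j}=(-1)^{b(i-1)\odot b(j-1)}$. Here $b(x)$ denotes the $p$-bit binary representation of $x\in\{0,\dots,m-1\}$, $\odot$ is the bitwise dot product and $\oplus$ is bitwise XOR. $\mathrm{perm}\,A=\sum_{\sigma\in S_m}\prod_{i=1}^m a_{i,\sigma(i)}$. *)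

From HB Require Import structures.
From mathcomp Require Import all_boot all_order all_algebra all_fingroup.
Set Implicit Arguments. Unset Strict Implicit. Unset Printing Implicit Defensive.
Import GRing.Theory.
Local Open Scope ring_scope.

Definition bitn (x k : nat) : bool := odd (x %/ 2 ^ k).

Definition bdot (p x y : nat) : nat := (\sum_(k < p) (bitn x k && bitn y k))%N.

(* Sylvester matrix H(2^p), 0-based indices: entry (i,j) = (-1)^(b(i) . b(j)) *)
Definition sylvester (p : nat) : 'M[int]_(2 ^ p) :=
  \matrix_(i < 2 ^ p, j < 2 ^ p) ((-1) ^+ bdot p i j).

Definition permanent (R : comNzRingType) (n : nat) (A : 'M[R]_n) : R :=
  \sum_(s : 'S_n) \prod_(i < n) A i (s i).

Definition bigxor (n : nat) (r : 'I_n -> nat) : nat :=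
  \big[Nat.lxor/0%N]_(i < n) r i.

From HB Require Import structures.
From mathcomp Require Import all_boot all_order all_algebra all_fingroup.
From mathcomp Require Import zify ring.
From Stdlib Require PeanoNat.
Set Implicit Arguments. Unset Strict Implicit. Unset Printing Implicit Defensive.

(* Index the columns of H(2^q) by x in (Z/2)^q and label each row t by its bit
   vector lam t, so that the entries are the characters (-1)^<lam t, x> and
   perm A = P_q(K) := sum over bijections tau : (Z/2)^q -> K of
   prod_x (-1)^<lam (tau x), x>.  Pairing the columns (0,x) and (1,x), the two
   rows sent there form a block S = {a, b} contributing the character of
   lam a + lam b on the remaining q-1 bits, times a sign from the lowest bits.
   Summing over which row of each block goes to (1,x) turns that sign into
   sum_{t in S} (-1)^{lam t 0}, which is +-2 if a and b have the same lowest bit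
   and 0 otherwise.  Hence P_{q+1}(K) = 2^(2^q) * sum_M +-P_q(M), where M ranges
   over the perfect matchings of K into pairs of equal lowest bit; their number
   is odd iff both lowest-bit classes of K are even.  Induction gives
   P_q(K) = 2^(2^q - 1) [every bit column of K is even] mod 2^(2^q), and the
   xor hypothesis says precisely that every bit column is even. *)

Lemma sum_nat_bool (I : finType) (A : {pred I}) (P : pred I) :
  (\sum_(i in A) P i = #|[set i in A | P i]|)%N.
Proof.
rewrite -sum1_card [RHS](eq_bigl (fun i => (i \in A) && P i)) => [|i]; last by rewrite inE.
by rewrite big_mkcondr; apply: eq_bigr => i _; case: (P i).
Qed.

Lemma odd_sum_nat (I : finType) (A : {pred I}) (f : I -> nat) :
  odd (\sum_(i in A) f i) = odd #|[set i in A | odd (f i)]|.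
Proof.
rewrite -sum_nat_bool !(big_morph odd oddD (erefl (odd 0))).
by apply: eq_bigr => i _; case: (odd (f i)).
Qed.

Lemma odd_sum_const (I : finType) (A : {pred I}) (f : I -> nat) (b : bool) :
  {in A, forall i, odd (f i) = b} -> odd (\sum_(i in A) f i) = odd #|A| && b.
Proof.
move=> fA; rewrite odd_sum_nat.
have -> : [set i in A | odd (f i)] = if b then [set i in A] else set0.
  by apply/setP => i; case: b fA => fA; rewrite !inE; case: (boolP (i \in A)) => // /fA ->.
by case: b {fA}; rewrite ?cards0 ?andbT ?andbF // cardsE.
Qed.

(** * Monochromatic perfect matchings *)

Section Matchings.
Variable T : finType.

Definition perfect_matchings (K : {set T}) : {set {set {set T}}} :=
  [set M | [&& trivIset M, cover M == K & [forall S in M, #|S| == 2]]].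

Lemma perfect_matchingsP K M :
  reflect [/\ trivIset M, cover M = K & forall S, S \in M -> #|S| = 2]
          (M \in perfect_matchings K).
Proof.
rewrite inE; apply: (iffP and3P) => [[tM /eqP cM /forall_inP M2]|[tM cM M2]].
  by split=> // S /M2 /eqP.
by split=> //; [rewrite cM | apply/forall_inP => S /M2 ->].
Qed.

Lemma card2_mem_pair (S : {set T}) a : #|S| = 2 -> a \in S ->
  exists2 b, a != b & S = [set a; b].
Proof.
move/eqP/cards2P => [x [y [xy ->]]]; rewrite !inE => /orP[] /eqP ->.
  by exists y.
by exists x; [rewrite eq_sym | rewrite setUC].
Qed.

Variable rho : T -> bool.

Definition monochromatic (S : {set T}) :=
  [forall a in S, forall b in S, rho a == rho b].

Definition mono_matchings (K : {set T}) :=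
  [set M in perfect_matchings K | [forall S in M, monochromatic S]].

Lemma monochromatic_pair a b : monochromatic [set a; b] = (rho a == rho b).
Proof.
apply/forall_inP/eqP => [mab|eab x].
  by have /forall_inP/(_ b) := mab a (setU11 _ _); rewrite !inE eqxx orbT => /(_ isT)/eqP.
rewrite !inE => xab; apply/forall_inP => y; rewrite !inE.
by case/orP: xab => /eqP ->; case/orP => /eqP ->; rewrite ?eab.
Qed.

Lemma mono_matchingsP K M :
  reflect [/\ M \in perfect_matchings K & forall S, S \in M -> monochromatic S]
          (M \in mono_matchings K).
Proof. by apply: (iffP setIdP) => -[MK /forall_inP]. Qed.

Lemma mono_matchings0 : mono_matchings set0 = [set set0].
Proof.
apply/setP => M; rewrite in_set1; apply/mono_matchingsP/eqP.
  case=> /perfect_matchingsP[_ cM M2] _; apply/setP => S; rewrite inE.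
  apply/negbTE/negP => SM; have := M2 S SM.
  have : S \subset cover M by apply: bigcup_sup.
  by rewrite cM subset0 => /eqP ->; rewrite cards0.
move=> ->; split=> [|S]; last by rewrite inE.
by apply/perfect_matchingsP; split=> [||S]; rewrite /trivIset /cover ?big_set0 ?cards0 ?inE.
Qed.

Definition same_colour (K : {set T}) (a : T) : {set T} := [set b in K :\ a | rho b == rho a].

Lemma mono_matching_unique_partner K a M : M \in mono_matchings K -> a \in K ->
  (\sum_(b in same_colour K a) ([set a; b] \in M) = 1)%N.
Proof.
case/mono_matchingsP => /perfect_matchingsP[tM cM M2] monoM aK.
have : a \in cover M by rewrite cM.
case/bigcupP => S SM aS; have [b ab eS] := card2_mem_pair (M2 _ SM) aS.
have bK : b \in K by rewrite -cM; apply/bigcupP; exists S; rewrite // eS !inE eqxx orbT.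
have rba : rho b == rho a by rewrite eq_sym -monochromatic_pair -eS monoM.
have bC : b \in same_colour K a by rewrite !inE eq_sym ab bK rba.
rewrite (bigD1 b) //= -eS SM big1 // => c /andP[cC cb]; apply/eqP; rewrite eqb0; apply/negP => acM.
have ca : c != a by move: cC; rewrite !inE => /andP[/andP[]].
have /(trivIsetP tM _ _ acM SM) : [set a; c] != S.
  by rewrite eS; apply: contra cb => /eqP/setP/(_ c); rewrite !inE eqxx orbT (negbTE ca).
by rewrite -setI_eq0 => /eqP/setP/(_ a); rewrite !inE eqxx aS.
Qed.

Lemma card_mono_matchings_pair (K : {set T}) a b : a \in K -> b \in same_colour K a ->
  #|[set M in mono_matchings K | [set a; b] \in M]| = #|mono_matchings (K :\ a :\ b)|.
Proof.
rewrite !inE => aK /andP[/andP[ba bK] rba].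
set S := [set a; b]; set K' := K :\ a :\ b.
have S'M M' : M' \in mono_matchings K' -> S \notin M'.
  case/mono_matchingsP => /perfect_matchingsP[_ cM' _] _; apply/negP => SM'.
  have : a \in cover M' by apply/bigcupP; exists S; rewrite // !inE eqxx.
  by rewrite cM' !inE eqxx andbF.
rewrite -[RHS](card_in_imset (f := fun M' => S |: M')); last first.
  by move=> M1 M2 /S'M h1 /S'M h2 /= e; rewrite -(setU1K h1) e setU1K.
apply: eq_card => M; rewrite inE; apply/andP/imsetP => [[MK SM]|[M' M'K ->]].
  exists (M :\ S); last by rewrite setD1K.
  case/mono_matchingsP: MK => /perfect_matchingsP[tM cM M2] monoM.
  apply/mono_matchingsP; split=> [|S']; last by rewrite inE => /andP[_ /monoM].
  apply/perfect_matchingsP; split=> [||S']; first exact: trivIsetS (subD1set M S) tM.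
    rewrite coverD1 // cM; apply/setP => t; rewrite !inE.
    by rewrite negb_or andbA [(t != b) && _]andbC.
  by rewrite inE => /andP[_ /M2].
have S'M' := S'M _ M'K; split; last exact: setU11.
case/mono_matchingsP: M'K => /perfect_matchingsP[tM cM M2] monoM.
apply/mono_matchingsP; split=> [|S']; last first.
  by rewrite !inE => /orP[/eqP ->|/monoM //]; rewrite monochromatic_pair eq_sym.
apply/perfect_matchingsP; split=> [||S'].
- apply: (trivIsetU1 _ tM _).1 => [B BM|]; last by apply/negP => /M2; rewrite cards0.
  rewrite disjoints_subset; apply/subsetP => t tS; rewrite inE; apply/negP => tB.
  have : t \in cover M' by apply/bigcupP; exists B.
  by rewrite cM !inE; move: tS; rewrite !inE => /orP[] /eqP ->; rewrite eqxx ?andbF.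
- have -> : cover (S |: M') = S :|: cover M' by rewrite /cover big_setU1.
  rewrite cM; apply/setP => t; rewrite !inE.
  case: (t =P a) => [->|_] /=; first by rewrite aK.
  by case: (t =P b) => [->|_].
- by rewrite !inE => /orP[/eqP ->|/M2 //]; rewrite cards2 eq_sym ba.
Qed.

Lemma card_mono_matchings_rec (K : {set T}) a : a \in K ->
  #|mono_matchings K| = (\sum_(b in same_colour K a) #|mono_matchings (K :\ a :\ b)|)%N.
Proof.
move=> aK; rewrite -sum1_card.
under eq_bigr => M /mono_matching_unique_partner/(_ aK) <- do [].
rewrite exchange_big /=; apply: eq_bigr => b bC.
by rewrite sum_nat_bool card_mono_matchings_pair.
Qed.

Lemma odd_card_same_colour (K : {set T}) a : a \in K ->
  ~~ odd #|K| -> ~~ odd #|[set t in K | rho t]| -> odd #|same_colour K a|.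
Proof.
move=> aK eK eR; set C := [set t in K | rho t == rho a].
have cardC : #|C| = #|same_colour K a|.+1.
  rewrite (cardsD1 a C) !inE aK eqxx add1n; congr _.+1.
  by apply: eq_card => t; rewrite !inE andbA.
have eC : ~~ odd #|C|.
  case ra : (rho a).
    by rewrite (_ : C = [set t in K | rho t]) //; apply/setP => t; rewrite !inE ra eqb_id.
  move: eK; rewrite -(cardsID [set t | rho t] K) oddD negb_add.
  rewrite (_ : K :&: _ = [set t in K | rho t]); last by apply/setP => t; rewrite !inE.
  rewrite (_ : K :\: _ = C); last by apply/setP => t; rewrite !inE ra andbC eqbF_neg.
  by rewrite (negbTE eR) => /eqP <-.
by move: eC; rewrite cardC /= negbK.
Qed.

Lemma odd_card_mono_matchings (K : {set T}) :
  odd #|mono_matchings K| = ~~ odd #|K| && ~~ odd #|[set t in K | rho t]|.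
Proof.
have [n ltKn] := ubnP #|K|; elim: n K ltKn => // n IH K.
case: (set_0Vmem K) => [-> _|[a aK] ltKn].
  rewrite mono_matchings0 cards1 cards0 /=.
  by rewrite (_ : [set t in set0 | rho t] = set0) ?cards0 //; apply/setP => t; rewrite !inE.
set pi := _ && _; rewrite (card_mono_matchings_rec aK) (odd_sum_const (b := pi)).
  case: (boolP pi) => [/andP[eK eR]|]; last by rewrite andbF.
  by rewrite odd_card_same_colour.
move=> b; rewrite !inE => /andP[/andP[ba bK] rba].
have cardK : #|K| = (#|K :\ a :\ b|).+2.
  by rewrite (cardsD1 a K) aK (cardsD1 b (K :\ a)) !inE ba bK.
have cardR : #|[set t in K | rho t]| = (rho a + rho a + #|[set t in K :\ a :\ b | rho t]|)%N.
  rewrite (cardsD1 a [set t in K | rho t]) (cardsD1 b ([set t in K | rho t] :\ a)).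
  rewrite !inE aK ba bK (eqP rba) /= addnA; congr (_ + _)%N.
  by apply: eq_card => t; rewrite !inE !andbA.
rewrite IH; last by move: ltKn; rewrite cardK; lia.
by rewrite /pi cardK cardR /= negbK !oddD addbb.
Qed.
End Matchings.

(** * Characters of (Z/2)^q and the column-pairing recursion *)

Import GRing.Theory.
Local Open Scope ring_scope.

(* [bits q] is (Z/2)^q with the lowest coordinate first, and [chi f x] is the
   character (-1)^(sum_k f k x_k). *)
Fixpoint bits (q : nat) : finType :=
  if q is q'.+1 then (bool * bits q')%type else unit.

Fixpoint chi (q : nat) : (nat -> bool) -> bits q -> int :=
  match q return (nat -> bool) -> bits q -> int with
  | 0 => fun _ _ => 1
  | q'.+1 => fun f x => (-1) ^+ (f 0%N && x.1) * @chi q' (fun k => f k.+1) x.2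
  end.

Lemma card_bits q : #|bits q| = (2 ^ q)%N.
Proof. by elim: q => [|q IH] /=; rewrite ?card_unit // card_prod IH card_bool expnS. Qed.

Lemma eq_chi q f g : f =1 g -> @chi q f =1 chi g.
Proof. by elim: q f g => [|q IH] f g fg x //=; rewrite fg (IH _ (fun k => g k.+1)). Qed.

Lemma chiM q f g (x : bits q) : chi f x * chi g x = chi (fun k => f k (+) g k) x.
Proof.
elim: q f g x => [|q IH] f g x /=; first by rewrite mulr1.
by rewrite mulrACA -signr_addb IH -andb_addl.
Qed.

Definition inj_into (C T : finType) (K : {set T}) (tau : {ffun C -> T}) :=
  injectiveb tau && [forall x, tau x \in K].

(* P_q(K): the permanent of the matrix (chi (lam t) x) with rows t in K. *)
Definition charperm q (T : finType) (K : {set T}) (lam : T -> nat -> bool) : int :=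
  \sum_(tau : {ffun bits q -> T} | inj_into K tau) \prod_(x : bits q) chi (lam (tau x)) x.

Definition even_bitcols q (T : finType) (K : {set T}) (lam : T -> nat -> bool) :=
  [forall k : 'I_q, ~~ odd #|[set t in K | lam t k]|].

(* The label of a block {a, b}: lam a + lam b with the lowest bit dropped. *)
Definition block_label (T : finType) (lam : T -> nat -> bool) (S : {set T}) (k : nat) :=
  odd #|[set t in S | lam t k.+1]|.

Lemma block_label_pair (T : finType) (lam : T -> nat -> bool) a b k : a != b ->
  block_label lam [set a; b] k = lam a k.+1 (+) lam b k.+1.
Proof.
move=> ab; rewrite /block_label -sum_nat_bool big_setU1 ?big_set1 ?inE //= oddD.
by case: (lam a _); case: (lam b _).
Qed.

Lemma prod_bits_succ q (F : bits q.+1 -> int) :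
  \prod_(y : bits q.+1) F y = \prod_(x : bits q) (F (false, x) * F (true, x)).
Proof.
transitivity (\prod_(y : bool * bits q) F (y.1, y.2)); first by apply: eq_bigr => -[].
rewrite -(pair_bigA _ (fun b x => F (b, x))) exchange_big.
by apply: eq_bigr => x _; rewrite big_bool mulrC.
Qed.

Lemma chi_pair q f g (x : bits q) :
  chi (q := q.+1) f (false, x) * chi (q := q.+1) g (true, x) =
  (-1) ^+ g 0%N * chi (fun k => f k.+1 (+) g k.+1) x.
Proof. by rewrite /= andbF andbT mul1r mulrCA chiM. Qed.

Section PairColumns.
Variables (q : nat) (T : finType) (K : {set T}) (lam : T -> nat -> bool).

Definition pairs_of (tau : {ffun bits q.+1 -> T}) : {ffun bits q -> {set T}} :=
  [ffun x => [set tau (false, x); tau (true, x)]].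

Definition is_pairing (g : {ffun bits q -> {set T}}) :=
  [forall x, (#|g x| == 2%N) && (g x \subset K)] &&
  [forall x, forall y, (x != y) ==> [disjoint g x & g y]].

Definition partner (S : {set T}) (t : T) := odflt t [pick u in S :\ t].

Definition assemble (g : {ffun bits q -> {set T}}) (h : {ffun bits q -> T}) :
  {ffun bits q.+1 -> T} :=
  [ffun y => if y.1 then h y.2 else partner (g y.2) (h y.2)].

Lemma partnerP (S : {set T}) t : #|S| = 2%N -> t \in S ->
  [/\ partner S t \in S, partner S t != t & S = [set partner S t; t]].
Proof.
move=> S2 tS; have [b tb eS] := card2_mem_pair S2 tS.
have -> : partner S t = b.
  rewrite /partner eS; case: pickP => [u|/(_ b)]; last by rewrite !inE eqxx orbT eq_sym tb.
  by rewrite !inE => /andP[ut /orP[] /eqP // eu]; rewrite eu eqxx in ut.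
by rewrite eS !inE eqxx orbT eq_sym tb setUC.
Qed.

Lemma is_pairingP (g : {ffun bits q -> {set T}}) : reflect
  ((forall x, #|g x| = 2%N /\ g x \subset K) /\
   (forall x y, x != y -> [disjoint g x & g y])) (is_pairing g).
Proof.
apply: (iffP andP) => [[/forallP g2 /forallP gD]|[g2 gD]]; split.
- by move=> x; case/andP: (g2 x) => /eqP.
- by move=> x y; move/forallP: (gD x) => /(_ y) /implyP.
- by apply/forallP => x; case: (g2 x) => -> ->.
- by apply/forallP => x; apply/forallP => y; apply/implyP; apply: gD.
Qed.

Lemma is_pairing_inj (g : {ffun bits q -> {set T}}) : is_pairing g -> injective g.
Proof.
case/is_pairingP => g2 gD x y gxy; apply/eqP/negP => /negP /gD.
by rewrite -gxy -setI_eq0 setIid -cards_eq0 (g2 x).1.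
Qed.

Lemma pairs_of_is_pairing (tau : {ffun bits q.+1 -> T}) :
  inj_into K tau -> is_pairing (pairs_of tau).
Proof.
case/andP => /injectiveP tau_inj /forallP tauK; apply/is_pairingP; split.
  move=> x; rewrite ffunE cards2 (inj_eq tau_inj) xpair_eqE /=; split => //.
  by apply/subsetP => t; rewrite !inE => /orP[] /eqP ->.
move=> x y xy; rewrite !ffunE disjoints_subset; apply/subsetP => t.
by rewrite !inE => /orP[] /eqP ->; rewrite !(inj_eq tau_inj) !xpair_eqE /= (negbTE xy) ?andbF.
Qed.

Lemma assembleP (g : {ffun bits q -> {set T}}) (h : {ffun bits q -> T}) :
  is_pairing g -> [forall x, h x \in g x] ->
  inj_into K (assemble g h) /\ pairs_of (assemble g h) = g.
Proof.
case/is_pairingP => g2 gD /forallP hg.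
have hP x := partnerP (g2 x).1 (hg x).
have assemble_in b x : assemble g h (b, x) \in g x.
  by rewrite ffunE /=; case: b; [apply: hg | case: (hP x)].
split; last by apply/ffunP => x; rewrite !ffunE /=; case: (hP x) => _ _ <-.
apply/andP; split; last first.
  by apply/forallP => -[b x]; apply: (subsetP (g2 x).2); apply: assemble_in.
apply/injectiveP => -[b x] [b' y] e.
have [exy|/gD] := eqVneq x y; last first.
  by rewrite disjoints_subset => /subsetP /(_ _ (assemble_in b x)); rewrite inE e assemble_in.
subst y; congr (_, _); move: e; rewrite !ffunE /=; case: (hP x) => _ ne _.
by case: b; case: b' => // e; [rewrite -e eqxx in ne | rewrite e eqxx in ne].
Qed.

Lemma assemble_pairs_of (tau : {ffun bits q.+1 -> T}) :
  inj_into K tau -> assemble (pairs_of tau) [ffun x => tau (true, x)] = tau.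
Proof.
case/andP => /injectiveP tau_inj _; apply/ffunP => -[[] x]; rewrite !ffunE //=.
have ne : tau (false, x) != tau (true, x) by rewrite (inj_eq tau_inj) xpair_eqE.
have := @partnerP [set tau (false, x); tau (true, x)] (tau (true, x)).
rewrite cards2 ne !inE eqxx orbT => /(_ erefl isT) [].
by move=> /orP[/eqP //|/eqP ->]; rewrite eqxx.
Qed.

Lemma sum_inj_into_pairs (F : {ffun bits q.+1 -> T} -> int) :
  \sum_(tau | inj_into K tau) F tau =
  \sum_(g | is_pairing g) \sum_(h : {ffun bits q -> T} | [forall x, h x \in g x])
    F (assemble g h).
Proof.
rewrite (partition_big pairs_of is_pairing) /=; last exact: pairs_of_is_pairing.
apply: eq_bigr => g gP.
rewrite (reindex_onto (assemble g) (fun tau => [ffun x => tau (true, x)])) /=; last first.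
  by move=> tau /andP[tauK /eqP <-]; apply: assemble_pairs_of.
apply: eq_bigl => h; apply/idP/idP => [/andP[/andP[_ /eqP <-] _]|hg].
  by apply/forallP => x; rewrite !ffunE !inE eqxx orbT.
have [-> ->] := assembleP gP hg; rewrite eqxx andbT.
by apply/eqP/ffunP => x; rewrite !ffunE.
Qed.

Lemma sum_assemble (g : {ffun bits q -> {set T}}) : is_pairing g ->
  \sum_(h : {ffun bits q -> T} | [forall x, h x \in g x])
      \prod_(y : bits q.+1) chi (lam (assemble g h y)) y =
  \prod_(x : bits q) (chi (block_label lam (g x)) x * \sum_(t in g x) (-1) ^+ lam t 0%N).
Proof.
move=> gP; have /is_pairingP[g2 _] := gP.
rewrite (eq_bigr (fun h : {ffun bits q -> T} => \prod_x
    ((-1) ^+ lam (h x) 0%N * chi (block_label lam (g x)) x))) => [|h /forallP hg].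
  rewrite big_split /=; under eq_bigr do rewrite big_split /=.
  rewrite -big_distrl /= mulrC; congr (_ * _).
  by rewrite bigA_distr_big_dep /=; apply: eq_bigl => h; apply/forallP/familyP.
rewrite prod_bits_succ; apply: eq_bigr => x _; rewrite !ffunE /= chi_pair.
case: (partnerP (g2 x).1 (hg x)) => _ ne {2}->.
by congr (_ * _); apply: eq_chi => k; rewrite block_label_pair.
Qed.

Hypothesis cardK : #|K| = (2 ^ q.+1)%N.

Lemma card_perfect_matching M : M \in perfect_matchings K -> #|M| = (2 ^ q)%N.
Proof.
case/perfect_matchingsP => tM cM M2; move/eqP: tM.
rewrite cM cardK (eq_bigr (fun _ => 2%N)) // sum_nat_const expnS; lia.
Qed.

Lemma pairing_image_perfect (g : {ffun bits q -> {set T}}) :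
  is_pairing g -> [set g x | x : bits q] \in perfect_matchings K.
Proof.
move=> gP; have g_inj := is_pairing_inj gP; case/is_pairingP: gP => g2 gD.
have tg : trivIset [set g x | x : bits q].
  apply/trivIsetP => _ _ /imsetP[x _ ->] /imsetP[y _ ->] gxy.
  by apply: gD; apply: contraNneq gxy => ->.
apply/perfect_matchingsP; split=> // [|_ /imsetP[x _ ->]]; last by rewrite (g2 x).1.
apply/eqP; rewrite eqEcard; apply/andP; split.
  by apply/bigcupsP => _ /imsetP[x _ ->]; exact: (g2 x).2.
move/eqP: tg => <-; rewrite big_imset /=; last by move=> x y _ _; apply: g_inj.
rewrite (eq_bigr (fun _ => 2%N)) => [|x _]; last by rewrite (g2 x).1.
by rewrite sum_nat_const card_bits cardK expnS mulnC.
Qed.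

Lemma is_pairing_onto M (g : {ffun bits q -> {set T}}) : M \in perfect_matchings K ->
  is_pairing g && ([set g x | x : bits q] == M) = inj_into M g.
Proof.
move=> MK; have cardM := card_perfect_matching MK.
case/perfect_matchingsP: MK => tM cM M2; apply/idP/idP.
  case/andP => gP /eqP <-; apply/andP; split.
    by apply/injectiveP; apply: is_pairing_inj.
  by apply/forallP => x; rewrite imset_f.
case/andP => /injectiveP g_inj /forallP gM; apply/andP; split.
  apply/is_pairingP; split=> [x|x y xy]; first split; first exact: M2.
    by rewrite -cM; apply/subsetP => t gxt; apply/bigcupP; exists (g x).
  by apply: (trivIsetP tM) => //; apply: contra xy => /eqP /g_inj ->.
rewrite eqEcard card_imset // cardM card_bits leqnn andbT.
by apply/subsetP => _ /imsetP[x _ ->].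
Qed.

Lemma charperm_rec :
  charperm q.+1 K lam = \sum_(M in perfect_matchings K)
    (\prod_(S in M) \sum_(t in S) (-1) ^+ lam t 0%N) * charperm q M (block_label lam).
Proof.
rewrite /charperm sum_inj_into_pairs; under eq_bigr => g gP do rewrite sum_assemble //.
rewrite (partition_big (fun g : {ffun bits q -> {set T}} => [set g x | x : bits q])
                       (mem (perfect_matchings K))) /=; last exact: pairing_image_perfect.
apply: eq_bigr => M MK; rewrite big_distrr /= (eq_bigl (inj_into M)) => [|g]; last first.
  by rewrite is_pairing_onto.
apply: eq_bigr => g; rewrite -(is_pairing_onto _ MK) => /andP[gP /eqP <-].
rewrite big_imset /= => [|x y _ _]; last exact: is_pairing_inj.
by rewrite -big_split; apply: eq_bigr => x _; rewrite mulrC.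
Qed.
End PairColumns.

(** * The congruence modulo 2^(2^q) *)

Lemma prod_natr_bool (R : comPzSemiRingType) (I : finType) (A : {pred I}) (b : pred I) :
  \prod_(i in A) (b i)%:R = [forall i in A, b i]%:R :> R.
Proof.
case: forall_inP => [bA|/forall_inP]; first by rewrite big1 // => i /bA ->.
rewrite negb_forall_in => /existsP[i /andP[iA /negbTE bi]].
by rewrite (bigD1 i) //= bi mul0r.
Qed.

Lemma sum_sign_card2 (T : finType) (rho : T -> bool) (S : {set T}) : #|S| = 2 ->
  \sum_(t in S) (-1) ^+ rho t =
  2 * (monochromatic rho S)%:R * (-1) ^+ (#|[set t in S | rho t]|./2) :> int.
Proof.
move/eqP/cards2P => [a [b [ab ->]]].
rewrite big_setU1 ?big_set1 ?inE //= monochromatic_pair -sum_nat_bool.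
by rewrite big_setU1 ?big_set1 ?inE //=; case: (rho a); case: (rho b).
Qed.

Lemma prod_sum_sign_perfect (T : finType) (rho : T -> bool) K M :
  M \in perfect_matchings K ->
  \prod_(S in M) \sum_(t in S) (-1) ^+ rho t =
  2 ^+ #|M| * (M \in mono_matchings rho K)%:R *
  (-1) ^+ (\sum_(S in M) #|[set t in S | rho t]|./2) :> int.
Proof.
move=> MK; have /perfect_matchingsP[_ _ M2] := MK.
rewrite (eq_bigr _ (fun S SM => sum_sign_card2 rho (M2 S SM))) !big_split /=.
rewrite prodr_const prod_natr_bool prodrXr; congr (_ * _%:R * _).
by rewrite inE MK.
Qed.

Lemma dvdz_sign_cong (d x y : int) (n : nat) :
  (d %| 2 * y)%Z -> (d %| x - y)%Z -> (d %| (-1) ^+ n * x - y)%Z.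
Proof.
rewrite -signr_odd; case: (odd n) => d2y dxy; last by rewrite mul1r.
have -> : (-1) ^+ 1 * x - y = - (x - y) - 2 * y by ring.
by rewrite rpredB ?rpredN.
Qed.

Lemma dvdz_sum_cong (I : finType) (A : {pred I}) (d : int) (x : I -> int) (y : int) :
  (forall i, i \in A -> (d %| x i - y)%Z) -> (d %| \sum_(i in A) x i - \sum_(i in A) y)%Z.
Proof. by move=> dxy; rewrite -sumrB rpred_sum. Qed.

Lemma charperm0 (T : finType) (K : {set T}) (lam : T -> nat -> bool) :
  #|K| = 1%N -> charperm 0 K lam = 1.
Proof.
move/eqP/cards1P => [t0 ->]; rewrite /charperm (big_pred1 [ffun _ => t0]) ?big1 // => tau.
apply/andP/eqP => [[_ /forallP tau_t0]|->]; first by apply/ffunP => -[]; apply/set1P; rewrite ffunE.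
by split; [apply/injectiveP => -[] [] | apply/forallP => x; rewrite ffunE set11].
Qed.

Lemma even_bitcols_rec q (T : finType) (K : {set T}) (lam : T -> nat -> bool) :
  even_bitcols q.+1 K lam =
  ~~ odd #|[set t in K | lam t 0%N]| && even_bitcols q K (fun t k => lam t k.+1).
Proof.
apply/forallP/andP => [ev|[ev0 /forallP evS] [[|k] ltkq] //].
  by split; [exact: (ev ord0) | apply/forallP => k; exact: (ev (lift ord0 k))].
exact: (evS (Ordinal (ltkq : (k < q)%N))).
Qed.

Lemma even_bitcols_block q (T : finType) (K : {set T}) (lam : T -> nat -> bool) M :
  M \in perfect_matchings K ->
  even_bitcols q M (block_label lam) = even_bitcols q K (fun t k => lam t k.+1).
Proof.
case/perfect_matchingsP => tM cM _; apply: eq_forallb => k; congr (~~ _).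
rewrite -[in RHS]sum_nat_bool -cM big_trivIset //= odd_sum_nat.
by congr (odd _); apply: eq_card => S; rewrite !inE /block_label sum_nat_bool.
Qed.

Lemma charperm_rec_mono q (T : finType) (K : {set T}) (lam : T -> nat -> bool) :
  #|K| = (2 ^ q.+1)%N ->
  charperm q.+1 K lam = 2 ^+ (2 ^ q) *
    \sum_(M in mono_matchings (fun t => lam t 0%N) K)
      (-1) ^+ (\sum_(S in M) #|[set t in S | lam t 0%N]|./2) * charperm q M (block_label lam).
Proof.
move=> cardK; rewrite charperm_rec // big_distrr /=.
pose mono (M : {set {set T}}) := [forall S in M, monochromatic (fun t => lam t 0%N) S].
rewrite [RHS](eq_bigl (fun M => (M \in perfect_matchings K) && mono M)) => [|M];
  last by rewrite inE.
rewrite big_mkcondr /=; apply: eq_bigr => M MK.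
rewrite (prod_sum_sign_perfect _ MK) (card_perfect_matching cardK MK) inE MK /= -/(mono M).
by case: (mono M); rewrite ?mulr1 ?mulrA ?mulr0 ?mul0r.
Qed.

Theorem charperm_mod q (T : finType) (K : {set T}) (lam : T -> nat -> bool) :
  #|K| = (2 ^ q)%N ->
  (2 ^+ (2 ^ q) %| charperm q K lam - 2 ^+ (2 ^ q).-1 * (even_bitcols q K lam)%:R)%Z.
Proof.
elim: q T K lam => [|q IH] T K lam cardK.
  by rewrite charperm0 // (_ : even_bitcols 0 K lam) ?subrr //; apply/forallP => -[].
set N := (2 ^ q)%N; set rho := fun t => lam t 0%N.
set c0 := ~~ odd #|[set t in K | rho t]|; set c := even_bitcols q K (fun t k => lam t k.+1).
have N_gt0 : (0 < N)%N by rewrite expn_gt0.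
have twoN : 2 * 2 ^+ N.-1 = 2 ^+ N :> int by rewrite -exprS prednK.
have cong_M M : M \in mono_matchings rho K ->
    (2 ^+ N %| (-1) ^+ (\sum_(S in M) #|[set t in S | rho t]|./2) *
               charperm q M (block_label lam) - 2 ^+ N.-1 * c%:R)%Z.
  case/mono_matchingsP => MK _; apply: dvdz_sign_cong; first by rewrite mulrA twoN dvdz_mulr.
  by rewrite /c -(even_bitcols_block _ _ MK); apply/IH/(card_perfect_matching cardK).
have cong_count : (2 ^+ N %| #|mono_matchings rho K|%:R * (2 ^+ N.-1 * c%:R) -
                             2 ^+ N.-1 * (c0 && c)%:R)%Z.
  have : odd #|mono_matchings rho K| = c0.
    by rewrite odd_card_mono_matchings cardK expnS oddM.
  move: #|_| => n <-; rewrite -mulnb natrM -{1}(odd_double_half n) natrD -muln2 natrM.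
  have -> : forall x y z : int, (x + y * 2) * (z * c%:R) - z * (x * c%:R) = y * (2 * z) * c%:R.
    by move=> x y z; ring.
  by rewrite twoN dvdz_mulr ?dvdz_mull.
rewrite charperm_rec_mono // even_bitcols_rec -/c0 -/c.
have -> : (2 ^ q.+1 = N + N)%N by rewrite expnS mul2n addnn.
have -> : ((N + N).-1 = N + N.-1)%N by lia.
rewrite !exprD -mulrA -mulrBr dvdz_mul2l ?expf_neq0 //.
have := rpredD (dvdz_sum_cong cong_M) cong_count.
by rewrite sumr_const -[_ *+ #|_|]mulr_natl addrA subrK.
Qed.

(** * Binary encodings and the Sylvester permanent *)

Lemma Nat_odd a : Nat.odd a = odd a.
Proof.
rewrite {2}(PeanoNat.Nat.div2_odd a) plusE multE oddD oddM /=.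
by case: (Nat.odd a).
Qed.

Lemma Nat_div2 a : Nat.div2 a = a./2.
Proof.
rewrite {2}(PeanoNat.Nat.div2_odd a) plusE multE mul2n addnC.
by case: (Nat.odd a); rewrite /= ?half_double ?doubleK // uphalf_double.
Qed.

Lemma testbit_bitn a k : Nat.testbit a k = bitn a k.
Proof.
elim: k a => [|k IH] a /=; first by rewrite Nat_odd /bitn divn1.
by rewrite IH Nat_div2 /bitn -divn2 -divnMA expnS.
Qed.

Lemma bitn_lxor a b k : bitn (Nat.lxor a b) k = bitn a k (+) bitn b k.
Proof.
by rewrite -!testbit_bitn PeanoNat.Nat.lxor_spec; case: (Nat.testbit a k); case: (Nat.testbit b k).
Qed.

Lemma bitn_bigxor n (r : 'I_n -> nat) k :
  bitn (bigxor r) k = odd (\sum_(i < n) bitn (r i) k).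
Proof.
have bitn0 : bitn 0 k = false by rewrite /bitn div0n.
rewrite /bigxor (big_morph (bitn^~ k) (fun a b => bitn_lxor a b k) bitn0).
by rewrite (big_morph odd oddD (erefl (odd 0))); apply: eq_bigr => i _; case: bitn.
Qed.

Fixpoint nat_of_bits (q : nat) : bits q -> nat :=
  match q return bits q -> nat with
  | 0 => fun _ => 0%N
  | q'.+1 => fun x => (x.1 + 2 * @nat_of_bits q' x.2)%N
  end.

Lemma nat_of_bits_lt q (x : bits q) : (nat_of_bits x < 2 ^ q)%N.
Proof. by elim: q x => [|q IH] // [b x] /=; have := IH x; rewrite expnS; case: b; lia. Qed.

Lemma nat_of_bits_inj q : injective (@nat_of_bits q).
Proof.
elim: q => [[] []|q IH [b x] [b' y] /= e] //.
have eb : b = b' by move: e; case: b; case: b' => /=; lia.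
by subst b'; congr (_, _); apply: IH; move: e; lia.
Qed.

Lemma bitn_nat_of_bits q (x : bits q.+1) k :
  bitn (nat_of_bits x) k = if k is k'.+1 then bitn (nat_of_bits x.2) k' else x.1.
Proof.
case: x => b x; case: k => [|k] /=; rewrite /bitn.
  by rewrite divn1 oddD oddM addbF; case: b.
by rewrite expnS divnMA addnC mulnC divnMDl // (@divn_small b) ?addn0 //; case: b.
Qed.

Lemma chi_bitn q f (x : bits q) :
  chi f x = \prod_(k < q) (-1) ^+ (f k && bitn (nat_of_bits x) k).
Proof.
elim: q f x => [|q IH] f x; first by rewrite big_ord0.
rewrite big_ord_recl /= IH bitn_nat_of_bits; congr (_ * _).
by apply: eq_bigr => k _; rewrite bitn_nat_of_bits.
Qed.

Lemma permanent_by_columns (R : comNzRingType) n (A : 'M[R]_n) :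
  permanent A = \sum_(s : 'S_n) \prod_(j < n) A (s j) j.
Proof.
rewrite /permanent (reindex_inj (@invg_inj _)); apply: eq_bigr => s _.
by rewrite (reindex_inj (@perm_inj _ s)); apply: eq_bigr => j _; rewrite permK.
Qed.

Lemma sum_perm_injective (T : finType) (R : nmodType) (G : {ffun T -> T} -> R) :
  \sum_(s : {perm T}) G (pval s) = \sum_(f : {ffun T -> T} | injectiveb f) G f.
Proof.
symmetry; rewrite (reindex (@pval _)) /=; last first.
  by exists (insubd (1%g : {perm T})) => /= f inj_f; first apply: val_inj; apply: insubdK.
by apply: eq_bigl => s; rewrite (valP s).
Qed.

Lemma sum_injective_reindex (C D T : finType) (R : comPzSemiRingType) (e : C -> D)
    (F : T -> D -> R) : bijective e ->
  \sum_(f : {ffun D -> T} | injectiveb f) \prod_j F (f j) j =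
  \sum_(tau : {ffun C -> T} | injectiveb tau) \prod_x F (tau x) (e x).
Proof.
case=> e' eK e'K.
rewrite (reindex (fun tau : {ffun C -> T} => [ffun j => tau (e' j)])) /=; last first.
  apply: onW_bij; exists (fun f : {ffun D -> T} => [ffun x => f (e x)]) => f.
    by apply/ffunP => x; rewrite !ffunE eK.
  by apply/ffunP => y; rewrite !ffunE e'K.
apply: eq_big => [tau|tau _].
  apply/injectiveP/injectiveP => [inj_tau x y exy|inj_tau x y].
    by apply: (can_inj eK); apply: inj_tau; rewrite !ffunE !eK.
  by rewrite !ffunE => /inj_tau /(can_inj e'K).
rewrite (reindex e) /=; last by apply: onW_bij; exists e'.
by apply: eq_bigr => x _; rewrite ffunE eK.
Qed.

Definition ord_of_bits p (x : bits p) : 'I_(2 ^ p) := Ordinal (nat_of_bits_lt x).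

Lemma ord_of_bits_bij p : bijective (@ord_of_bits p).
Proof.
apply: inj_card_bij; last by rewrite card_bits card_ord.
by move=> x y /(congr1 val) /nat_of_bits_inj.
Qed.

Lemma permanent_sylvester_rows p (r : 'I_(2 ^ p) -> 'I_(2 ^ p)) :
  permanent (\matrix_(i < 2 ^ p, j < 2 ^ p) sylvester p (r i) j) =
  charperm p [set: 'I_(2 ^ p)] (fun i k => bitn (r i) k).
Proof.
set A := \matrix_(i, j) _.
rewrite permanent_by_columns.
transitivity (\sum_(f : {ffun 'I_(2 ^ p) -> 'I_(2 ^ p)} | injectiveb f) \prod_j A (f j) j).
  rewrite -(sum_perm_injective (fun f => \prod_j A (f j) j)).
  by apply: eq_bigr => s _; apply: eq_bigr => j _; rewrite pvalE.
rewrite (sum_injective_reindex _ (ord_of_bits_bij p)).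
apply: eq_big => [tau|tau _].
  by rewrite /inj_into; case: injectiveb => //=; apply/esym/forallP => x; rewrite inE.
apply: eq_bigr => x _; rewrite !mxE chi_bitn /bdot expr_sum.
by apply: eq_bigr => k _.
Qed.

Lemma even_bitcols_bigxor q n (r : 'I_n -> nat) :
  bigxor r = 0%N -> even_bitcols q [set: 'I_n] (fun i k => bitn (r i) k).
Proof.
move=> xor0; apply/forallP => k; rewrite -sum_nat_bool (eq_bigl (fun=> true)) => [|i]; last first.
  by rewrite inE.
have := congr1 (bitn^~ k) xor0; rewrite /= bitn_bigxor => ->.
by rewrite /bitn div0n.
Qed.

Theorem proposition6 (p : nat) (hp : (2 < 2 ^ p)%N)
    (r : 'I_(2 ^ p) -> 'I_(2 ^ p))
    (hxor : bigxor (fun i => nat_of_ord (r i)) = 0%N) :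
  permanent (\matrix_(i < 2 ^ p, j < 2 ^ p) sylvester p (r i) j) != 0.
Proof.
rewrite permanent_sylvester_rows; apply/eqP => perm0.
have cardT : #|[set: 'I_(2 ^ p)]| = (2 ^ p)%N by rewrite cardsT card_ord.
have := charperm_mod (fun i k => bitn (r i) k) cardT.
rewrite perm0 (even_bitcols_bigxor _ hxor) sub0r rpredN mulr1 dvdz_Pexp2l //.
by rewrite leqNgt ltn_predL expn_gt0.
Qed.
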